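(* Let $f\in\mathbb R[x_1,\ldots,x_d]$ be a convenient non-degenerate weighted homogeneous polynomial and let $\delta_i$ be the exponent of the pure monomial $x_i^{\delta_i}$ of $f$. Let $B_f(T)=\frac{(\mathbb L-\mathbb 1)^d}{\mathbb 1-T}\sum_{\tau\in\Gamma_f^c}S_{\sigma(\tau)}(T)$. Then, in $\widehat{\mathcal M}[[T]]$, $$B_f(T)-\frac{T}{\mathbb 1-T}=-\sum_{m\ge1}\mathbb L^{-\sum_{i=1}^d\lfloor m/\delta_i\rfloor}T^m.$$
   Context: $\mathcal{AS}$-sets: semialgebraic $S\subset\mathbb P^n_{\mathbb R}$ such that for every real analytic arc $\gamma:(-1,1)\to\mathbb P^n_{\mathbb R}$ with $\gamma((-1,0))\subset S$ there is $\varepsilon>0$ with $\gamma((0,\varepsilon))\subset S$. $K_0(\mathcal{AS})$ is their Grothendieck ring (scissor relations, bijections with $\mathcal{AS}$ graph, cartesian product). For $n\ge1$, $K_0(\mathcal{AS}^n_{\mathrm{mon}})$ is the Grothendieck group of symbols $[\varphi_X:\mathbb R^*\circlearrowright X\to\mathbb R^*]$ ($X$ an $\mathcal{AS}$-set with $\mathbb R^*$-action and $\varphi_X$ both with $\mathcal{AS}$ graphs, $\varphi_X(\lambda x)=\lambda^n\varphi_X(x)$), modulo equivariant $\mathcal{AS}$-bijections over $\mathbb R^*$, scissor relations for invariant closed $\mathcal{AS}$-subsets, and independence of the choice of lifting of the action to $Y\times\mathbb R^m$ for symbols $\varphi_Y\circ\operatorname{pr}_Y$; product is fiber product over $\mathbb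 R^*$; $K_0(\mathcal{AS})$ acts by $[A]\cdot[\varphi_X]=[\varphi_X\circ\operatorname{pr}_X:A\times X\to\mathbb R^*]$ (trivial action on $A$). $K_0(\mathcal{AS}_{\mathrm{mon}})=\varinjlim_n K_0(\mathcal{AS}^n_{\mathrm{mon}})$ (for $n=km$, a level-$m$ action $\lambda\cdot x$ becomes $\lambda^k\cdot x$). $\mathbb 1=[\mathrm{id}:\mathbb R^*\to\mathbb R^*]$ with $\lambda\cdot r=\lambda r$, $\mathbb L=[\mathbb R]\cdot\mathbb 1$, $\mathcal M=K_0(\mathcal{AS}_{\mathrm{mon}})[\mathbb L^{-1}]$, and $\widehat{\mathcal M}$ is the completion of $\mathcal M$ with respect to the filtration $\mathcal F^m\mathcal M$ spanned by $[S]\mathbb L^{-i}$ with $i-\dim S\ge m$. For $f=\sum c_\nu x^\nu$: $\Gamma_f=\operatorname{Conv}(\bigcup_{c_\nu\neq0}(\nu+\mathbb R^d_{\ge0}))$ is the Newton polyhedron, $\Gamma_f^c$ its set of compact faces, $f_\tau=\sum_{\nu\in\tau}c_\nu x^\nu$, $m(k)=\inf\{k\cdot x:x\in\Gamma_f\}$, $\sigma(\tau)=\{k\in\mathbb R^d_{\ge0}:\{x\in\Gamma_f:k\cdot x=m(k)\}=\tau\}$, $S_{\sigma(\tau)}(T)=\sum_{k\in\sigma(\tau)\cap\mathbb N^d}\mathbb L^{-|k|}T^{m(k)}$, $|k|=\sum_ik_i$. $f$ is convenient if each $x_i^{\delta_i}$ ($\delta_i\ge1$) appears in $f$; non-degenerate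 if for every $\tau\in\Gamma_f^c$ the partials of $f_\tau$ have no common zero in $(\mathbb R^* )^d$; weighted homogeneous if $f(\lambda^{w_1}x_1,\ldots,\lambda^{w_d}x_d)=\lambda^wf(x)$ for some $w_i,w\in\mathbb N_{>0}$ and all $\lambda\in\mathbb R$. *)

From HB Require Import structures.
From mathcomp Require Import all_boot all_order all_algebra.
From mathcomp Require Import mpoly.
From mathcomp Require Import reals.
From Stdlib Require Import ClassicalDescription ClassicalEpsilon.
From Stdlib Require List.

Set Implicit Arguments.
Unset Strict Implicit.
Unset Printing Implicit Defensive.

Import Order.TTheory GRing.Theory Num.Theory.
Local Open Scope ring_scope.

(* Abstract model of the coefficient ring \hat{M}: a commutative ring  *)
(* A with a decreasing Z-indexed filtration F by additive subgroups,    *)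
(* multiplicative (F m * F n <= F (m+n)), 1 \in F 0, separated and     *)
(* complete.  (\hat{M} with the filtration F^m of the paper, completed, *)
(* is such a ring, with L^-1 \in F^1.)                                 *)
Definition complete_filtration (A : comUnitRingType) (F : int -> A -> Prop) :=
  [/\ (forall n, F n 0 /\ forall x y, F n x -> F n y -> F n (x - y)),
      (forall m n, (m <= n)%R -> forall x, F n x -> F m x),
      (forall m n x y, F m x -> F n y -> F (m + n)%R (x * y)),
      F 0%R 1 &
      (forall x, (forall n, F n x) -> x = 0) /\
      (forall u : nat -> A,
          (forall n, exists N, forall p q, (N <= p)%N -> (N <= q)%N -> F n (u p - u q)) ->
          exists l, forall n, exists N, forall p, (N <= p)%N -> F n (u p - l))].

Definition has_sum (A : comUnitRingType) (F : int -> A -> Prop)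
    (I : Type) (P : I -> Prop) (a : I -> A) (s : A) : Prop :=
  forall n : int, exists S0 : seq I,
    (forall i, List.In i S0 -> P i) /\
    forall S : seq I, List.NoDup S -> (forall i, List.In i S -> P i) ->
      List.incl S0 S -> F n (s - \sum_(i <- S) a i).

(* The value of such a sum (0 if the family is not summable). *)
Definition hsum (A : comUnitRingType) (F : int -> A -> Prop)
    (I : Type) (P : I -> Prop) (a : I -> A) : A :=
  match excluded_middle_informative (exists s, has_sum F P a s) with
  | left h => proj1_sig (constructive_indefinite_description _ h)
  | right _ => 0
  end.

Definition pseries (A : comUnitRingType) := nat -> A.
Definition ps_mul (A : comUnitRingType) (p q : pseries A) : pseries A :=
  fun n => \sum_(i < n.+1) p i * q (n - i)%N.
Definition ps_sub (A : comUnitRingType) (p q : pseries A) : pseries A :=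
  fun n => p n - q n.
Definition ps_scale (A : comUnitRingType) (c : A) (p : pseries A) : pseries A :=
  fun n => c * p n.
Definition ps_T (A : comUnitRingType) : pseries A := fun n => if n == 1%N then 1 else 0.
Definition ps_inv_1mT (A : comUnitRingType) : pseries A := fun _ => 1.

Section Newton.
Variables (R : realType) (d : nat).

Definition dotR (k x : 'I_d -> R) : R := \sum_(i < d) k i * x i.

Definition nat_vec (k : 'I_d -> nat) : 'I_d -> R := fun i => (k i)%:R.

(* Gamma_f = Conv( U_{c_nu <> 0} (nu + R_{>=0}^d) ) *)
Definition newton (f : {mpoly R[d]}) (x : 'I_d -> R) : Prop :=
  exists (n : nat) (lam : 'I_n -> R) (y : 'I_n -> 'I_d -> R),
    [/\ forall j, 0 <= lam j,
        \sum_(j < n) lam j = 1,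
        forall j, exists nu : 'X_{1..d}, f@_nu != 0 /\ forall i, (nu i)%:R <= y j i
      & x = fun i => \sum_(j < n) lam j * y j i].

Definition face_of (f : {mpoly R[d]}) (k : 'I_d -> R) : ('I_d -> R) -> Prop :=
  fun x => newton f x /\ forall y, newton f y -> dotR k x <= dotR k y.

Definition is_mk (f : {mpoly R[d]}) (k : 'I_d -> R) (r : R) : Prop :=
  (forall y, newton f y -> r <= dotR k y) /\
  (forall e, 0 < e -> exists y, newton f y /\ dotR k y < r + e).

Definition is_face (f : {mpoly R[d]}) (tau : ('I_d -> R) -> Prop) : Prop :=
  exists k, (forall i, 0 <= k i) /\ tau = face_of f k.

(* compact faces Gamma_f^c (faces of a polyhedron are closed, so
   compact = bounded) *)
Definition compact_face (f : {mpoly R[d]}) (tau : ('I_d -> R) -> Prop) : Prop :=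
  is_face f tau /\ exists M : R, forall x, tau x -> forall i, `|x i| <= M.

Definition sigma_cone (f : {mpoly R[d]}) (tau : ('I_d -> R) -> Prop)
   (k : 'I_d -> R) : Prop :=
  (forall i, 0 <= k i) /\ face_of f k = tau.

Definition f_face (f : {mpoly R[d]}) (tau : ('I_d -> R) -> Prop) : {mpoly R[d]} :=
  \sum_(nu <- msupp f)
     (if excluded_middle_informative (tau (fun i => (nu i)%:R))
      then f@_nu *: 'X_[nu] else 0).

Definition convenient (f : {mpoly R[d]}) : Prop :=
  forall i : 'I_d, exists delta : nat, (1 <= delta)%N /\ f@_(mnm1 i *+ delta)%MM != 0.

Definition non_degenerate (f : {mpoly R[d]}) : Prop :=
  forall tau, compact_face f tau ->
    ~ exists x : 'I_d -> R, (forall i, x i != 0) /\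
        forall i, (mderiv i (f_face f tau)).@[x] = 0.

Definition weighted_homogeneous (f : {mpoly R[d]}) : Prop :=
  exists (w : 'I_d -> nat) (ww : nat),
    (forall i, (0 < w i)%N) /\ (0 < ww)%N /\
    forall (lam : R) (x : 'I_d -> R),
      f.@[fun i => lam ^+ (w i) * x i] = lam ^+ ww * f.@[x].

End Newton.

Section Bf.
Variables (A : comUnitRingType) (F : int -> A -> Prop) (L : A).
Variables (R : realType) (d : nat) (f : {mpoly R[d]}).

Definition S_sigma (tau : ('I_d -> R) -> Prop) : pseries A :=
  fun j => hsum F (fun k : 'I_d -> nat =>
                     sigma_cone f tau (nat_vec R k) /\ is_mk f (nat_vec R k) j%:R)
                  (fun k => L^-1 ^+ (\sum_(i < d) k i)).

Definition sum_S : pseries A :=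
  fun j => hsum F (fun tau => compact_face f tau) (fun tau => S_sigma tau j).

Definition B_f : pseries A :=
  ps_scale ((L - 1) ^+ d) (ps_mul (ps_inv_1mT A) sum_S).

End Bf.

(* Weighted homogeneity, compared coefficientwise after a Kronecker substitution, puts the
   support of f on the hyperplane sum_i nu_i / delta_i = 1 through the vertices delta_i e_i.
   Hence, for k in N^d, m(k) = min_i k_i delta_i, the face cut out by k is compact iff all k_i > 0,
   and it only depends on the set of indices where this minimum is attained.  So finitely many
   compact faces occur and sum_tau S_sigma(tau) has T^j-coefficient the sum of L^-|k| over
   k > 0 with min_i k_i delta_i = j.  Summing over j <= n leaves the difference of the two
   orthant sums sum_{k >= a} L^-|k| = L^-|a| / (1 - L^-1)^d for a = (1,...,1) and
   a_i = n / delta_i + 1, so the T^n-coefficient of B_f is 1 - L^-(sum_i n / delta_i).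
   Identities in the completed ring are checked modulo every F^N, truncating lattice sums to
   the box [0, N]^d. *)

From HB Require Import structures.
From mathcomp Require Import all_boot all_order all_algebra.
From mathcomp Require Import mpoly.
From mathcomp Require Import reals.
From mathcomp Require Import boolp.
From mathcomp Require Import ring lra.
From Stdlib Require List.
Import Order.TTheory GRing.Theory Num.Theory.
Local Open Scope ring_scope.

Set Implicit Arguments.
Unset Strict Implicit.
Unset Printing Implicit Defensive.

Lemma In_mem (T : eqType) (x : T) (s : seq T) : List.In x s <-> x \in s.
Proof.
elim: s => [|y s IH] //=; rewrite inE; split.
- by case=> [->|/IH ->]; rewrite ?eqxx ?orbT.
- by case/orP=> [/eqP ->|/IH]; [left|right].
Qed.

Lemma NoDup_uniq (T : eqType) (s : seq T) : List.NoDup s <-> uniq s.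
Proof.
elim: s => [|y s IH] /=; first by split => // _; constructor.
split.
- by case/List.NoDup_cons_iff => ys /IH ->; rewrite andbT; apply/negP => /In_mem.
- by case/andP=> /negP ys /IH us; constructor => // /In_mem.
Qed.

Section FilteredRing.
Variables (A : comUnitRingType) (F : int -> A -> Prop).
Hypothesis hF : complete_filtration F.

Lemma filtr0 n : F n 0. Proof. by case: hF => [h _ _ _ _]; case: (h n). Qed.

Lemma filtrB n x y : F n x -> F n y -> F n (x - y).
Proof. by case: hF => [h _ _ _ _]; case: (h n) => _; apply. Qed.

Lemma filtrN n x : F n x -> F n (- x).
Proof. by move=> h; rewrite -sub0r; apply: filtrB => //; apply: filtr0. Qed.

Lemma filtrD n x y : F n x -> F n y -> F n (x + y).
Proof. by move=> hx hy; rewrite -[y]opprK; apply: filtrB => //; apply: filtrN. Qed.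

Lemma filtr_le m n x : (m <= n)%R -> F n x -> F m x.
Proof. by case: hF => [_ h _ _ _] mn; apply: h mn x. Qed.

Lemma filtrM m n x y : F m x -> F n y -> F (m + n)%R (x * y).
Proof. by case: hF => [_ _ h _ _]; apply: h. Qed.

Lemma filtr1 : F 0 1. Proof. by case: hF. Qed.

Lemma filtr_sep x : (forall n, F n x) -> x = 0.
Proof. by case: hF => [_ _ _ _ [h _]]; apply: h. Qed.

Lemma filtr_sum n (I : Type) (r : seq I) (P : pred I) (a : I -> A) :
  (forall i, P i -> F n (a i)) -> F n (\sum_(i <- r | P i) a i).
Proof.
move=> h; elim: r => [|x r IH]; first by rewrite big_nil; apply: filtr0.
by rewrite big_cons; case: ifP => // Px; apply: filtrD (h _ Px) IH.
Qed.

Lemma filtrMl n x y : F 0 x -> F n y -> F n (x * y).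
Proof. by move=> hx hy; have := filtrM hx hy; rewrite add0r. Qed.

Lemma filtrX n x k : F n%:Z x -> F (n * k)%N%:Z (x ^+ k).
Proof.
move=> hx; elim: k => [|k IH]; first by rewrite muln0 expr0; apply: filtr1.
by rewrite exprS mulnS PoszD; apply: filtrM.
Qed.

Lemma filtr0X x k : F 0 x -> F 0 (x ^+ k).
Proof. by move=> hx; have := filtrX k hx; rewrite mul0n. Qed.

Lemma filtr_prodB m (I : Type) (r : seq I) (a b : I -> A) :
  (0 <= m)%R -> (forall i, F 0 (a i)) -> (forall i, F 0 (b i)) ->
  (forall i, F m (a i - b i)) ->
  F m (\prod_(i <- r) a i - \prod_(i <- r) b i).
Proof.
move=> m0 ha hb hab; elim: r => [|x r IH].
  by rewrite !big_nil subrr; apply: filtr0.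
have hr : F 0 (\prod_(j <- r) a j).
  by apply: (big_ind (F 0)) => //; [apply: filtr1 | move=> u v hu hv; apply: filtrMl].
rewrite !big_cons.
have -> : a x * \prod_(j <- r) a j - b x * \prod_(j <- r) b j =
  \prod_(j <- r) a j * (a x - b x) + b x * (\prod_(j <- r) a j - \prod_(j <- r) b j) by ring.
by apply: filtrD; apply: filtrMl.
Qed.

Lemma has_sum_unique (I : Type) (P : I -> Prop) (a : I -> A) s t :
  has_sum F P a s -> has_sum F P a t -> s = t.
Proof.
move=> hs ht; apply/eqP; rewrite -subr_eq0; apply/eqP; apply: filtr_sep => n.
case: (hs n) => S0 [S0P hS0]; case: (ht n) => S1 [S1P hS1].
pose S01 : seq {classic I} := S0 ++ S1.
pose S := undup S01.
have SP i : List.In i S -> P i.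
  by move=> /In_mem; rewrite mem_undup mem_cat => /orP [] /In_mem; [apply: S0P | apply: S1P].
have SN : List.NoDup S by apply/NoDup_uniq; apply: undup_uniq.
have inclS (S2 : seq {classic I}) : {subset S2 <= S01} -> List.incl S2 S.
  by move=> sub i /In_mem /sub iS; apply/In_mem; rewrite mem_undup.
have -> : s - t = (s - \sum_(i <- S) a i) - (t - \sum_(i <- S) a i) by ring.
apply: filtrB; [apply: hS0 | apply: hS1] => //; apply: inclS => i.
  by rewrite mem_cat => ->.
by rewrite mem_cat orbC => ->.
Qed.

Lemma hsum_eq (I : Type) (P : I -> Prop) (a : I -> A) s :
  has_sum F P a s -> hsum F P a = s.
Proof.
move=> hs; rewrite /hsum.
case: ClassicalEpsilon.excluded_middle_informative => [h|[]]; last by exists s.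
exact: has_sum_unique (proj2_sig (ClassicalEpsilon.constructive_indefinite_description _ h)) hs.
Qed.

Lemma has_sum_pred0 (I : Type) (P : I -> Prop) (a : I -> A) :
  (forall i, ~ P i) -> has_sum F P a 0.
Proof.
move=> h n; exists [::]; split => // -[|x S] _ SP _; first by rewrite big_nil subrr; apply: filtr0.
by case: (h x); apply: SP; left.
Qed.

End FilteredRing.

Lemma big_subset_split (V : nmodType) (T : eqType) (r s : seq T) (h : T -> V) :
  uniq r -> uniq s -> {subset s <= r} ->
  \sum_(x <- r) h x = \sum_(x <- s) h x + \sum_(x <- r | x \notin s) h x.
Proof.
move=> ur us sr; rewrite (bigID (mem s)) /=; congr (_ + _).
rewrite -big_filter; apply/perm_big/uniq_perm; rewrite ?filter_uniq // => x.
by rewrite mem_filter; case: (boolP (x \in s)) => //= /sr ->.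
Qed.

Section Box.
Variable d : nat.

Definition weight (k : 'I_d -> nat) : nat := (\sum_(i < d) k i)%N.

Definition box (M : nat) : seq ('I_d -> nat) :=
  map (fun (g : {ffun 'I_d -> 'I_M.+1}) i => val (g i)) (enum {ffun 'I_d -> 'I_M.+1}).

Lemma mem_box M k : (k \in box M) = [forall i, k i <= M]%N.
Proof.
apply/mapP/forallP => [[g _ ->] i|h]; first by rewrite -ltnS ltn_ord.
exists [ffun i => inord (k i)]; first by rewrite mem_enum.
by apply/funext => i /=; rewrite ffunE inordK // ltnS.
Qed.

Lemma box_uniq M : uniq (box M).
Proof.
rewrite map_inj_uniq ?enum_uniq // => g1 g2 h; apply/ffunP => i; apply/val_inj.
exact: (congr1 (fun k : 'I_d -> nat => k i) h).
Qed.

Lemma box_subset M p : (M <= p)%N -> {subset box M <= box p}.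
Proof.
move=> Mp k; rewrite !mem_box => /forallP h; apply/forallP => i.
exact: leq_trans (h i) Mp.
Qed.

Lemma leq_weight k i : (k i <= weight k)%N.
Proof. by rewrite /weight (bigD1 i) //= leq_addr. Qed.

Lemma notin_box_weight M k : k \notin box M -> (M < weight k)%N.
Proof.
rewrite mem_box negb_forall => /existsP [i]; rewrite -ltnNge => h.
exact: leq_trans h (leq_weight k i).
Qed.

End Box.

Section LatticeSums.
Variables (A : comUnitRingType) (F : int -> A -> Prop).
Hypothesis hF : complete_filtration F.
Variables (l : A) (d : nat).
Hypothesis hl : F 1 l.

Definition lpow (k : 'I_d -> nat) : A := l ^+ weight k.

Definition lpow_on (P : ('I_d -> nat) -> Prop) k : A := if `[< P k >] then lpow k else 0.

Definition box_sum P M : A := \sum_(k <- box d M) lpow_on P k.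

Lemma filtr_lX k : F k%:Z (l ^+ k).
Proof. by have := filtrX hF k hl; rewrite mul1n. Qed.

Lemma filtr_lpow_on P k : F (weight k) (lpow_on P k).
Proof. by rewrite /lpow_on; case: ifP => _; [apply: filtr_lX | apply: (filtr0 hF)]. Qed.

Lemma box_sum_diff P M p : (M <= p)%N -> F M.+1 (box_sum P p - box_sum P M).
Proof.
move=> Mp; rewrite /box_sum (big_subset_split _ (box_uniq d p) (box_uniq d M)).
  rewrite addrAC subrr add0r; apply: (filtr_sum hF) => // k kM.
  by apply: (filtr_le hF) (filtr_lpow_on P k) => //; rewrite lez_nat notin_box_weight.
exact: box_subset.
Qed.

Lemma box_sum_cvg P :
  exists s, forall n, exists N, forall p, (N <= p)%N -> F n (box_sum P p - s).
Proof.
case: hF => [_ _ _ _ [_ complete]]; apply: complete => n.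
exists (absz n) => p q hp hq.
have hn : (n <= (absz n).+1%:Z)%R by rewrite (le_trans (lez_abs n)) // lez_nat.
have -> : box_sum P p - box_sum P q =
  (box_sum P p - box_sum P (absz n)) - (box_sum P q - box_sum P (absz n)) by ring.
by apply: (filtrB hF); apply: (filtr_le hF hn); apply: box_sum_diff.
Qed.

Lemma has_sum_box_lim P s :
  (forall n M : nat, (n <= M)%N -> F n (s - box_sum P M)) -> has_sum F P lpow s.
Proof.
move=> approx n; set N := absz n; have hn : (n <= N)%R by apply: lez_abs.
exists (filter (fun k => `[< P k >]) (box d N)); split.
  by move=> k /In_mem; rewrite mem_filter => /andP [/asboolP].
move=> S /NoDup_uniq uS SP iS.
pose p := (N + \sum_(k <- S) weight k)%N.
have Sp : {subset S <= box d p}.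
  move=> k kS; rewrite mem_box; apply/forallP => i.
  apply: leq_trans (leq_weight k i) _.
  by rewrite /p (bigD1_seq k) //= addnCA leq_addr.
have -> : s - \sum_(k <- S) lpow k = (s - box_sum P p) + (box_sum P p - \sum_(k <- S) lpow k).
  by ring.
apply: (filtrD hF); first by apply: (filtr_le hF hn) (approx _ _ _); rewrite leq_addr.
rewrite /box_sum (big_subset_split _ (box_uniq d p) uS Sp).
have -> : \sum_(k <- S) lpow_on P k = \sum_(k <- S) lpow k.
  by rewrite !big_seq; apply: eq_bigr => k /In_mem /SP Pk; rewrite /lpow_on asboolT.
rewrite addrAC subrr add0r; apply: (filtr_sum hF) => k kS.
have [kN|kN] := boolP (k \in box d N).
  rewrite /lpow_on asboolF; first exact: (filtr0 hF).
  move=> Pk; move/negP: kS; apply; apply/In_mem/iS/In_mem.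
  by rewrite mem_filter kN andbT asboolT.
apply: (filtr_le hF hn); apply: (filtr_le hF) (filtr_lpow_on P k).
by rewrite lez_nat ltnW // notin_box_weight.
Qed.

Lemma hsum_lpow_approx P n M :
  (n <= M)%N -> F n (hsum F P lpow - box_sum P M).
Proof.
have [s hs] := box_sum_cvg P.
have approx n' M' : (n' <= M')%N -> F n' (s - box_sum P M').
  move=> nM; have [N hN] := hs n'.
  have -> : s - box_sum P M' =
    (box_sum P (maxn N M') - box_sum P M') - (box_sum P (maxn N M') - s) by ring.
  apply: (filtrB hF); last by apply: hN; rewrite leq_maxl.
  by apply: (filtr_le hF) (box_sum_diff P (leq_maxr N M')); rewrite lez_nat ltnW // ltnS.
by rewrite (hsum_eq hF (has_sum_box_lim approx)); apply: approx.
Qed.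

Section Partition.
Variables (T : eqType) (g : ('I_d -> nat) -> T) (C : T -> Prop).
Variables (Q : ('I_d -> nat) -> Prop) (Ts : seq T).
Hypotheses (Ts_uniq : uniq Ts) (Ts_C : forall t, t \in Ts -> C t).
Hypothesis Ts_cover : forall k, C (g k) -> Q k -> g k \in Ts.

Lemma box_sum_partition M :
  \sum_(t <- Ts) box_sum (fun k => g k = t /\ Q k) M = box_sum (fun k => C (g k) /\ Q k) M.
Proof.
rewrite /box_sum exchange_big /=; apply: eq_bigr => k _.
rewrite {2}/lpow_on; case: (asboolP (C (g k) /\ Q k)) => [[Cg Qk]|nCQ].
  rewrite (bigD1_seq (g k)) ?Ts_cover //= /lpow_on asboolT // big1_seq ?addr0 // => t.
  by case/andP=> tg _; rewrite asboolF // => -[gt _]; move: tg; rewrite gt eqxx.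
rewrite big1_seq // => t /andP [_ /Ts_C Ct]; rewrite /lpow_on asboolF // => -[gt Qk].
by apply: nCQ; rewrite gt.
Qed.

Lemma hsum_block_notin t : C t -> t \notin Ts -> hsum F (fun k => g k = t /\ Q k) lpow = 0.
Proof.
move=> Ct tT; apply: (hsum_eq hF); apply: (has_sum_pred0 hF) => k [gk Qk].
by move/negP: tT; apply; rewrite -gk Ts_cover // gk.
Qed.

Lemma hsum_partition :
  hsum F C (fun t => hsum F (fun k => g k = t /\ Q k) lpow) =
  hsum F (fun k => C (g k) /\ Q k) lpow.
Proof.
set b := fun t => _; set W := hsum F (fun k => C (g k) /\ Q k) lpow.
apply: (hsum_eq hF) => n.
exists Ts; split => [t /In_mem /Ts_C //|S /NoDup_uniq uS SC TsS].
have -> : \sum_(t <- S) b t = \sum_(t <- Ts) b t.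
  rewrite (big_subset_split _ uS Ts_uniq); last by move=> t tT; apply/In_mem/TsS/In_mem.
  rewrite [X in _ + X]big1_seq ?addr0 // => t /andP [tT /In_mem /SC Ct].
  exact: hsum_block_notin.
have -> : W - \sum_(t <- Ts) b t = (W - box_sum (fun k => C (g k) /\ Q k) (absz n)) -
    \sum_(t <- Ts) (b t - box_sum (fun k => g k = t /\ Q k) (absz n)).
  by rewrite sumrB box_sum_partition; ring.
apply: (filtr_le hF (lez_abs n)); apply: (filtrB hF); first exact: hsum_lpow_approx.
by apply: (filtr_sum hF) => t _; apply: hsum_lpow_approx.
Qed.

End Partition.

End LatticeSums.

Arguments lpow {A} l {d} k.
Arguments lpow_on {A} l {d} P k.
Arguments box_sum {A} l {d} P M.

Section LevelSums.
Variables (A : comUnitRingType) (F : int -> A -> Prop).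
Hypothesis hF : complete_filtration F.
Variables (l : A) (d : nat).
Hypothesis hl : F 1 l.
Variable delta : 'I_d -> nat.
Hypothesis delta_gt0 : forall i, (0 < delta i)%N.

Definition pos_level (j : nat) (k : 'I_d -> nat) : Prop :=
  [/\ forall i, (0 < k i)%N, forall i, (j <= k i * delta i)%N & exists i, (k i * delta i)%N = j].

Definition orthant (a : 'I_d -> nat) (k : 'I_d -> nat) : Prop := forall i, (a i <= k i)%N.

Lemma orthantE a k : `[< orthant a k >] = [forall i, a i <= k i]%N.
Proof. exact/asboolP/forallP. Qed.

Lemma sum_lpow_on_pos_level n k :
  \sum_(j < n.+1) lpow_on l (pos_level j) k =
  lpow_on l (orthant (fun=> 1%N)) k - lpow_on l (orthant (fun i => (n %/ delta i).+1)) k.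
Proof.
rewrite /lpow_on !orthantE.
have [/forallP k_gt0|k_not_gt0] := boolP [forall i, 0 < k i]%N; last first.
  have k_not_big : ~~ [forall i, (n %/ delta i).+1 <= k i]%N.
    by apply: contra k_not_gt0 => /forallP h; apply/forallP => i; apply: leq_ltn_trans (h i).
  rewrite ifN // subrr big1 // => j _.
  by rewrite asboolF // => -[k_gt0 _ _]; move/forallP: k_not_gt0.
have [/forallP k_big|] := boolP [forall i, (n %/ delta i).+1 <= k i]%N.
  rewrite subrr big1 // => j _; rewrite asboolF // => -[_ _ [i hi]].
  have := k_big i; rewrite ltn_divLR ?delta_gt0 // hi => /leq_trans/(_ (ltn_ord j)).
  by rewrite ltnn.
rewrite subr0 negb_forall => /existsP [i0]; rewrite -leqNgt leq_divRL ?delta_gt0 // => hi0.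
case: (@arg_minnP _ i0 predT (fun i => k i * delta i)%N isT) => i1 _ hmin.
have i1n : (k i1 * delta i1 < n.+1)%N by rewrite ltnS (leq_trans (hmin i0 isT)).
rewrite (bigD1 (Ordinal i1n)) //= asboolT; last by split => // [i|]; [apply: hmin | exists i1].
rewrite big1 ?addr0 // => j jne; rewrite asboolF // => -[_ hj [i2 hi2]].
move/negP: jne; apply; apply/eqP/val_inj => /=.
by apply/eqP; rewrite eqn_leq hj -hi2 hmin.
Qed.

Lemma sum_box_sum_pos_level n N :
  \sum_(j < n.+1) box_sum l (pos_level j) N =
  box_sum l (orthant (fun=> 1%N)) N - box_sum l (orthant (fun i => (n %/ delta i).+1)) N.
Proof.
rewrite /box_sum exchange_big -sumrB /=.
by apply: eq_bigr => k _; rewrite sum_lpow_on_pos_level.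
Qed.

Lemma box_sum_orthant a N :
  box_sum l (orthant a) N =
  \prod_(i < d) \sum_(j < N.+1) (if (a i <= j)%N then l ^+ j else 0).
Proof.
rewrite bigA_distr_bigA /box_sum /box big_map big_enum /=; apply: eq_bigr => g _.
rewrite /lpow_on orthantE /lpow /weight; case: (boolP [forall i, _]) => [/forallP h|].
  by rewrite -prodrXr; apply: eq_bigr => i _; rewrite h.
by rewrite negb_forall => /existsP [i hi]; rewrite (bigD1 i) //= ifN // mul0r.
Qed.

Lemma mul1Br_sum_geom a N :
  (1 - l) * \sum_(j < N) (if (a <= j)%N then l ^+ j else 0) = l ^+ a - l ^+ maxn a N.
Proof.
elim: N => [|N IH]; first by rewrite big_ord0 mulr0 maxn0 subrr.
rewrite big_ord_recr /= mulrDr IH; case: (leqP a N) => aN.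
  by rewrite (maxn_idPr (leqW aN)) exprS; ring.
by rewrite (maxn_idPl aN); ring.
Qed.

Lemma filtr0_lX k : F 0 (l ^+ k).
Proof. exact: (filtr_le hF) (filtr_lX hF hl k). Qed.

Lemma box_sum_orthant_approx a N : (forall i, a i <= N.+1)%N ->
  F N.+1 ((1 - l) ^+ d * box_sum l (orthant a) N - l ^+ (\sum_(i < d) a i)).
Proof.
move=> aN; have -> : (1 - l) ^+ d = \prod_(i < d) (1 - l) by rewrite prodr_const card_ord.
rewrite box_sum_orthant -prodrXr -big_split /=.
apply: (filtr_prodB hF) => // i; rewrite ?mul1Br_sum_geom ?(maxn_idPr (aN i)).
- by apply: (filtrB hF); apply: filtr0_lX.
- exact: filtr0_lX.
- by rewrite addrAC subrr add0r; apply: (filtrN hF); apply: filtr_lX.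
Qed.

Lemma sum_hsum_pos_level n :
  (1 - l) ^+ d * \sum_(j < n.+1) hsum F (pos_level j) (lpow l) =
  l ^+ d - l ^+ (d + \sum_(i < d) n %/ delta i)%N.
Proof.
apply/eqP; rewrite -subr_eq0; apply/eqP; apply: (filtr_sep hF) => m.
set N := (absz m + n)%N; set a := fun i => (n %/ delta i).+1.
have hm : (m <= N)%R by rewrite (le_trans (lez_abs m)) // lez_nat leq_addr.
have sum1 : (\sum_(i < d) 1)%N = d by rewrite sum_nat_const card_ord muln1.
have sum_a : (\sum_(i < d) a i)%N = (d + \sum_(i < d) n %/ delta i)%N.
  by rewrite /a; under eq_bigr do rewrite -addn1; rewrite big_split /= sum1 addnC.
have -> : (1 - l) ^+ d * \sum_(j < n.+1) hsum F (pos_level j) (lpow l) -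
    (l ^+ d - l ^+ (d + \sum_(i < d) n %/ delta i)) =
  (1 - l) ^+ d * \sum_(j < n.+1) (hsum F (pos_level j) (lpow l) - box_sum l (pos_level j) N) +
  ((1 - l) ^+ d * box_sum l (orthant (fun=> 1%N)) N - l ^+ (\sum_(i < d) 1)) -
  ((1 - l) ^+ d * box_sum l (orthant a) N - l ^+ (\sum_(i < d) a i)).
  by rewrite sumrB sum_box_sum_pos_level sum1 sum_a; ring.
apply: (filtr_le hF hm); apply: (filtrB hF); first apply: (filtrD hF).
- apply: (filtrMl hF).
    by apply: (filtr0X hF); apply: (filtrB hF (filtr1 hF)); apply: (filtr_le hF) hl.
  by apply: (filtr_sum hF) => j _; apply: hsum_lpow_approx.
- by apply: (filtr_le hF) (box_sum_orthant_approx _); rewrite ?lez_nat.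
- apply: (filtr_le hF) (box_sum_orthant_approx _) => [|i]; first by rewrite lez_nat.
  by rewrite ltnS (leq_trans (leq_div _ _)) // leq_addl.
Qed.

End LevelSums.

Section DotR.
Variables (R : realType) (d : nat).

Lemma dotR_le (k x y : 'I_d -> R) :
  (forall i, 0 <= k i) -> (forall i, x i <= y i) -> dotR k x <= dotR k y.
Proof. by move=> k0 xy; apply: ler_sum => i _; apply: ler_wpM2l. Qed.

Lemma dotR_sumr n (lam : 'I_n -> R) (y : 'I_n -> 'I_d -> R) (k : 'I_d -> R) :
  dotR k (fun i => \sum_(j < n) lam j * y j i) = \sum_(j < n) lam j * dotR k (y j).
Proof.
rewrite /dotR; under eq_bigr do rewrite mulr_sumr.
rewrite exchange_big /=; apply: eq_bigr => j _; rewrite mulr_sumr.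
by apply: eq_bigr => i _; rewrite mulrCA.
Qed.

End DotR.

Section NewtonPolyhedron.
Variables (R : realType) (d : nat) (f : {mpoly R[d]}) (delta : 'I_d -> nat).
Hypothesis delta_gt0 : forall i, (0 < delta i)%N.
Hypothesis pure_monomial : forall i, f@_(mnm1 i *+ delta i)%MM != 0.
Hypothesis supp_hyperplane : forall nu : 'X_{1..d}, f@_nu != 0 ->
  \sum_(i < d) (nu i)%:R / (delta i)%:R = 1 :> R.

Let dl i : R := (delta i)%:R.

Lemma dl_gt0 i : 0 < dl i. Proof. by rewrite ltr0n. Qed.

Definition axis_pt (i : 'I_d) (t : R) : 'I_d -> R :=
  fun i' => if i' == i then dl i + t else 0.

Lemma newton_ge0 y : newton f y -> forall i, 0 <= y i.
Proof.
case=> n [lam [yy [lam_ge0 _ hy ->]]] i; apply: sumr_ge0 => j _.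
by apply: mulr_ge0 => //; case: (hy j) => nu [_ h]; apply: le_trans (h i).
Qed.

Lemma newton_axis_pt i t : 0 <= t -> newton f (axis_pt i t).
Proof.
move=> t0; exists 1%N, (fun=> 1), (fun=> axis_pt i t); split => //.
- by rewrite big_ord1.
- move=> _; exists (mnm1 i *+ delta i)%MM; split => // i'.
  rewrite mulmnE mnm1E /axis_pt eq_sym; case: (i' == i) => /=; last by rewrite mul0n.
  by rewrite mul1n lerDl.
- by apply/funext => i'; rewrite big_ord1 mul1r.
Qed.

Lemma dotR_axis_pt (k : 'I_d -> R) i t : dotR k (axis_pt i t) = k i * (dl i + t).
Proof.
by rewrite /dotR (bigD1 i) //= /axis_pt eqxx big1 ?addr0 // => j /negbTE ->; rewrite mulr0.
Qed.

Lemma supp_dotR_ge (k : 'I_d -> R) r nu :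
  (forall i, 0 <= k i) -> (forall i, r <= k i * dl i) ->
  f@_nu != 0 -> r <= dotR k (fun i => (nu i)%:R).
Proof.
move=> k0 kr fnu.
have -> : r = \sum_(i < d) r * ((nu i)%:R / dl i) by rewrite -mulr_sumr supp_hyperplane ?mulr1.
rewrite -subr_ge0 /dotR -sumrB; apply: sumr_ge0 => i _.
have -> : k i * (nu i)%:R - r * ((nu i)%:R / dl i) = (k i - r / dl i) * (nu i)%:R by ring.
apply: mulr_ge0 => //.
by rewrite subr_ge0 ler_pdivrMr ?dl_gt0.
Qed.

Lemma newton_dotR_ge (k : 'I_d -> R) r y :
  (forall i, 0 <= k i) -> (forall i, r <= k i * dl i) -> newton f y -> r <= dotR k y.
Proof.
move=> k0 kr [n [lam [yy [lam_ge0 lam_sum hy ->]]]]; rewrite dotR_sumr.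
rewrite -[r]mul1r -lam_sum mulr_suml; apply: ler_sum => j _; apply: ler_wpM2l => //.
case: (hy j) => nu [fnu nu_le]; apply: le_trans (supp_dotR_ge k0 kr fnu) _.
exact: dotR_le.
Qed.

Lemma newton_sum_div_ge1 y : newton f y -> 1 <= \sum_(i < d) y i / dl i.
Proof.
move=> ny; have := @newton_dotR_ge (fun i => (dl i)^-1) 1 y.
rewrite /dotR; under eq_bigr do rewrite mulrC; apply => // i.
  by rewrite invr_ge0 ltW ?dl_gt0.
by rewrite mulVf ?gt_eqF ?dl_gt0.
Qed.

Lemma is_mk_min (k : 'I_d -> R) r i0 :
  (forall i, 0 <= k i) -> (forall i, r <= k i * dl i) -> k i0 * dl i0 = r -> is_mk f k r.
Proof.
move=> k0 kr e; split=> [y|e1 he]; first exact: newton_dotR_ge.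
exists (axis_pt i0 0); split; first exact: newton_axis_pt.
by rewrite dotR_axis_pt addr0 e ltrDl.
Qed.

Lemma is_mk_unique (k : 'I_d -> R) r r' : is_mk f k r -> is_mk f k r' -> r = r'.
Proof.
suff le_mk a b : is_mk f k a -> is_mk f k b -> a <= b.
  by move=> h h'; apply/eqP; rewrite eq_le !(le_mk _ _ h h') ?(le_mk _ _ h' h).
move=> [ha _] [_ hb]; rewrite leNgt; apply/negP => ba.
have [y [ny hy]] : exists y, newton f y /\ dotR k y < b + (a - b) by apply: hb; rewrite subr_gt0.
have := ha y ny; lra.
Qed.

Lemma face_of_dotR (k : 'I_d -> R) r i0 x :
  (forall i, 0 <= k i) -> (forall i, r <= k i * dl i) -> k i0 * dl i0 = r ->
  face_of f k x <-> newton f x /\ dotR k x = r.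
Proof.
move=> k0 kr e; split=> [[nx hx]|[nx ex]]; last first.
  by split=> // y ny; rewrite ex; apply: newton_dotR_ge.
split=> //; apply/eqP; rewrite eq_le newton_dotR_ge // andbT.
by have := hx _ (newton_axis_pt i0 (lexx 0)); rewrite dotR_axis_pt addr0 e.
Qed.

Lemma dotR_eq_min (k : 'I_d -> R) r i0 x :
  (forall i, 0 < k i) -> (forall i, r <= k i * dl i) -> k i0 * dl i0 = r -> newton f x ->
  dotR k x = r <-> \sum_(i < d) x i / dl i = 1 /\ forall i, k i * dl i != r -> x i = 0.
Proof.
move=> k_gt0 kr e nx; have x_ge0 := newton_ge0 nx.
have r_gt0 : 0 < r by rewrite -e mulr_gt0 ?dl_gt0.
(* [dotR k x - r] splits into two nonnegative parts, both vanishing exactly at the face *)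
have dotR_split : dotR k x - r =
    \sum_(i < d) (k i - r / dl i) * x i + r * (\sum_(i < d) x i / dl i - 1).
  have -> : \sum_(i < d) (k i - r / dl i) * x i = dotR k x - r * \sum_(i < d) x i / dl i.
    by rewrite mulr_sumr /dotR -sumrB; apply: eq_bigr => i _; ring.
  by ring.
have term_ge0 i : 0 <= (k i - r / dl i) * x i.
  by apply: mulr_ge0; [rewrite subr_ge0 ler_pdivrMr ?dl_gt0 | apply: x_ge0].
have excess_ge0 : 0 <= r * (\sum_(i < d) x i / dl i - 1).
  by apply: mulr_ge0; [apply: ltW | rewrite subr_ge0 newton_sum_div_ge1].
split=> [dx|[sum1 off0]]; last first.
  apply/eqP; rewrite -subr_eq0 dotR_split sum1 subrr mulr0 addr0 big1 // => i _.
  have [<-|/off0->] := eqVneq (k i * dl i) r; last by rewrite mulr0.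
  by rewrite mulfK ?gt_eqF ?dl_gt0 // subrr mul0r.
move/eqP: dotR_split; rewrite dx subrr eq_sym paddr_eq0 ?sumr_ge0 //.
case/andP=> /eqP terms0; rewrite mulf_eq0 gt_eqF //= subr_eq0 => /eqP sum1.
split=> // i kir; have /eqP := @psumr_eq0P _ _ predT _ (fun i _ => term_ge0 i) terms0 i isT.
rewrite mulf_eq0 subr_eq0 => /orP [/eqP kie|/eqP //].
by move/eqP: kir; rewrite kie divfK ?gt_eqF ?dl_gt0.
Qed.

Lemma nat_vec_dl (k : 'I_d -> nat) i : nat_vec R k i * dl i = (k i * delta i)%N%:R.
Proof. by rewrite natrM. Qed.

Lemma is_mk_natE (k : 'I_d -> nat) (j : nat) (i0 : 'I_d) :
  is_mk f (nat_vec R k) j%:R <->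
  (forall i, j <= k i * delta i)%N /\ exists i, (k i * delta i)%N = j.
Proof.
have k_ge0 i : 0 <= nat_vec R k i by rewrite ler0n.
split=> [mk_j|[kj [i1 e]]]; last first.
  by apply: (is_mk_min (i0 := i1)) => [//|i|]; rewrite nat_vec_dl ?ler_nat ?e.
case: (@arg_minnP _ i0 predT (fun i => k i * delta i)%N isT) => i1 _ hmin.
have mk_i1 : is_mk f (nat_vec R k) (k i1 * delta i1)%N%:R.
  by apply: (is_mk_min (i0 := i1)) => [//|i|]; rewrite nat_vec_dl ?ler_nat ?hmin.
have /eqP := is_mk_unique mk_j mk_i1; rewrite eqr_nat => /eqP ->.
by split=> [i|]; [apply: hmin | exists i1].
Qed.

Lemma compact_face_natE (k : 'I_d -> nat) (i0 : 'I_d) :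
  compact_face f (face_of f (nat_vec R k)) <-> forall i, (0 < k i)%N.
Proof.
have k_ge0 i : 0 <= nat_vec R k i by rewrite ler0n.
split=> [[_ [M hM]] i|k_gt0].
  (* if [k i = 0], the whole ray through [axis_pt i 0] in direction [e_i] lies in the face *)
  rewrite lt0n; apply/negP => /eqP ki0.
  have t_ge0 : 0 <= `|M| + 1 by rewrite addr_ge0.
  have face_ray : face_of f (nat_vec R k) (axis_pt i (`|M| + 1)).
    split=> [|y ny]; first exact: newton_axis_pt.
    rewrite dotR_axis_pt {1}/nat_vec ki0 mul0r.
    by apply: sumr_ge0 => i' _; apply: mulr_ge0; [apply: k_ge0 | apply: newton_ge0].
  have := hM _ face_ray i; rewrite /axis_pt eqxx.
  by have := dl_gt0 i; have := ler_norm M; have := ler_norm (dl i + (`|M| + 1)); lra.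
split; first by exists (nat_vec R k).
exists (dotR (nat_vec R k) (axis_pt i0 0)) => x [nx hx] i.
rewrite ger0_norm ?newton_ge0 //; apply: le_trans (hx _ (newton_axis_pt i0 (lexx 0))).
apply: (@le_trans _ _ (nat_vec R k i * x i)).
  by rewrite ler_peMl ?newton_ge0 // ler1n.
rewrite /dotR (bigD1 i) //= lerDl; apply: sumr_ge0 => i' _.
by apply: mulr_ge0; [apply: k_ge0 | apply: newton_ge0].
Qed.

Lemma face_of_pos_levelE (k : 'I_d -> nat) j x : pos_level delta j k ->
  face_of f (nat_vec R k) x <->
  [/\ newton f x, \sum_(i < d) x i / dl i = 1 & forall i, (k i * delta i != j)%N -> x i = 0].
Proof.
case=> k_gt0 kj [i0 e].
have k_pos i : 0 < nat_vec R k i by rewrite ltr0n.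
have kr i : j%:R <= nat_vec R k i * dl i by rewrite nat_vec_dl ler_nat.
have e0 : nat_vec R k i0 * dl i0 = j%:R by rewrite nat_vec_dl e.
have off_iff i : (nat_vec R k i * dl i != j%:R) = (k i * delta i != j)%N.
  by rewrite nat_vec_dl eqr_nat.
rewrite (face_of_dotR x (fun i => ltW (k_pos i)) kr e0).
split=> [[nx /(dotR_eq_min k_pos kr e0 nx) [sum1 off0]]|[nx sum1 off0]].
  by split=> // i; rewrite -off_iff; apply: off0.
split=> //; apply/(dotR_eq_min k_pos kr e0 nx); split=> // i.
by rewrite off_iff; apply: off0.
Qed.

Lemma face_of_pos_level_eq (k k' : 'I_d -> nat) j j' :
  pos_level delta j k -> pos_level delta j' k' ->
  (forall i, (k i * delta i == j) = (k' i * delta i == j'))%N ->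
  face_of f (nat_vec R k) = face_of f (nat_vec R k').
Proof.
move=> lk lk' same; apply/funext => x; apply/propext.
rewrite (face_of_pos_levelE _ lk) (face_of_pos_levelE _ lk').
split=> -[nx sum1 off0]; split=> // i.
  by rewrite -same; apply: off0.
by rewrite same; apply: off0.
Qed.

Lemma face_of_pos_level_bounded (k : 'I_d -> nat) j : pos_level delta j k ->
  exists2 k' : 'I_d -> nat, (forall i, k' i <= 2 * \prod_(i < d) delta i)%N &
    face_of f (nat_vec R k') = face_of f (nat_vec R k).
Proof.
move=> lk; case: (lk) => _ _ [i0 e0].
set P := (\prod_(i < d) delta i)%N.
have dvdP i : (delta i %| P)%N by rewrite /P (bigD1 i) //= dvdn_mulr.
have P_gt0 : (0 < P)%N by apply: prodn_gt0.
(* pick [k'] with [k' i * delta i] equal to [P] on the argmin set of [k] and to [2P] off it *)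
pose k' i := (if k i * delta i == j then P %/ delta i else (2 * P) %/ delta i)%N.
have k'd i : (k' i * delta i = if k i * delta i == j then P else 2 * P)%N.
  by rewrite /k'; case: ifP => _; rewrite divnK // dvdn_mull.
have P_le : (P <= 2 * P)%N by rewrite leq_pmull.
exists k' => [i|]; first by rewrite /k'; case: ifP => _; rewrite (leq_trans (leq_div _ _)).
apply: (face_of_pos_level_eq (j := P)) lk _ => [|i].
  split=> [i|i|]; last by exists i0; rewrite k'd e0 eqxx.
    rewrite -(ltn_pmul2r (delta_gt0 i)) mul0n k'd.
    by case: ifP => _ //; rewrite muln_gt0 P_gt0.
  by rewrite k'd; case: ifP.
rewrite k'd; case: ifP => _; first by rewrite eqxx.
by rewrite -{2}[P]mul1n eqn_pmul2r.
Qed.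

End NewtonPolyhedron.

Lemma horner_eq0_poly (R : numDomainType) (p : {poly R}) : (forall t, p.[t] = 0) -> p = 0.
Proof.
move=> p0; apply/eqP; apply: contraT => pN0.
pose rs : seq R := [seq i%:R | i <- iota 0 (size p)].
have rs_roots : all (root p) rs by apply/allP => x /mapP [i _ ->]; apply/rootP.
have rs_uniq : uniq rs by rewrite map_inj_uniq ?iota_uniq // => a b /eqP; rewrite eqr_nat => /eqP.
by have := max_poly_roots pN0 rs_roots rs_uniq; rewrite size_map size_iota ltnn.
Qed.

Lemma sum_digits_lt B n (a : nat -> nat) : (forall i, i < n -> a i < B)%N ->
  (\sum_(i < n) a i * B ^ i < B ^ n)%N.
Proof.
elim: n => [|n IH] a_lt; first by rewrite big_ord0 expn0.
rewrite big_ord_recr /= expnS; apply: (@leq_trans ((a n).+1 * B ^ n)).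
  by rewrite mulSn ltn_add2r IH // => i /ltnW; apply: a_lt.
by rewrite leq_mul2r a_lt ?orbT.
Qed.

Lemma sum_digits_inj B n (a b : nat -> nat) :
  (forall i, i < n -> a i < B)%N -> (forall i, i < n -> b i < B)%N ->
  (\sum_(i < n) a i * B ^ i = \sum_(i < n) b i * B ^ i)%N ->
  forall i, (i < n)%N -> a i = b i.
Proof.
elim: n => [|n IH] a_lt b_lt //; rewrite !big_ord_recr /= => e.
have a_lt' i : (i < n)%N -> (a i < B)%N by move/ltnW; apply: a_lt.
have b_lt' i : (i < n)%N -> (b i < B)%N by move/ltnW; apply: b_lt.
have Bn_gt0 : (0 < B ^ n)%N by rewrite expn_gt0 (leq_ltn_trans _ (a_lt n _)).
have an : a n = b n.
  have := congr1 (fun m => m %/ B ^ n)%N e => /=.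
  by rewrite ![(_ + _ * _)%N]addnC !divnMDl // !divn_small ?sum_digits_lt // !addn0.
move: e; rewrite an => /addIn e i; rewrite ltnS leq_eqVlt => /orP [/eqP ->//|].
exact: IH.
Qed.

Lemma prod_exprX (R : comPzRingType) d (t : R) (g : 'I_d -> nat) (nu : 'X_{1..d}) :
  \prod_(i < d) (t ^+ g i) ^+ nu i = t ^+ (\sum_(i < d) g i * nu i)%N.
Proof. by rewrite -prodrXr; apply: eq_bigr => i _; rewrite exprM. Qed.

Definition wdeg d (w : 'I_d -> nat) (nu : 'X_{1..d}) : nat := (\sum_(i < d) w i * nu i)%N.

Section WeightedHomogeneous.
Variables (R : realType) (d : nat) (f : {mpoly R[d]}) (w : 'I_d -> nat) (ww : nat).
Hypothesis f_wh : forall (lam : R) (x : 'I_d -> R),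
  f.@[fun i => lam ^+ (w i) * x i] = lam ^+ ww * f.@[x].

(* Kronecker substitution [x_i = t ^ B ^ i], [lam = t ^ C]: monomials of [f] become distinct powers
   of [t], the weighted degree sitting in the digit above [code]. *)
Let B := (\sum_(nu <- msupp f) \sum_(i < d) nu i).+1%N.
Let code (nu : 'X_{1..d}) := (\sum_(i < d) nu i * B ^ i)%N.
Let C := (\sum_(nu <- msupp f) code nu).+1%N.

Lemma supp_lt_B nu i : nu \in msupp f -> (nu i < B)%N.
Proof.
move=> fnu; rewrite ltnS; apply: leq_trans (_ : \sum_(i < d) nu i <= _)%N.
  by rewrite (bigD1 i) //= leq_addr.
by rewrite (bigD1_seq nu) ?msupp_uniq //= leq_addr.
Qed.

Lemma code_lt nu : nu \in msupp f -> (code nu < C)%N.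
Proof. by move=> fnu; rewrite ltnS (bigD1_seq nu) ?msupp_uniq //= leq_addr. Qed.

Lemma code_inj : {in msupp f &, injective code}.
Proof.
move=> nu mu fnu fmu e; apply/mnmP => i.
pose ext (m : 'X_{1..d}) (n : nat) := if insub n is Some j then m j else 0%N.
have extE (m : 'X_{1..d}) (j : 'I_d) : ext m j = m j by rewrite /ext valK.
rewrite -!extE; apply: (@sum_digits_inj B d) => // [n nd|n nd|].
- by rewrite /ext insubT supp_lt_B.
- by rewrite /ext insubT supp_lt_B.
by under eq_bigr do rewrite extE; under [RHS]eq_bigr do rewrite extE.
Qed.

Lemma code_mod m nu : nu \in msupp f -> ((C * m + code nu) %% C)%N = code nu.
Proof. by move=> fnu; rewrite mulnC modnMDl modn_small ?code_lt. Qed.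

Lemma kronecker_poly_eq0 :
  \sum_(mu <- msupp f) f@_mu *: ('X^(C * wdeg w mu + code mu) - 'X^(C * ww + code mu)) = 0.
Proof.
apply: horner_eq0_poly => t; have := f_wh (t ^+ C) (fun i => t ^+ (B ^ i)).
rewrite !mevalE mulr_sumr => /eqP; rewrite -subr_eq0 -sumrB => /eqP e.
rewrite horner_sum -[RHS]e.
apply: eq_bigr => mu _; rewrite hornerZ hornerD hornerN !hornerXn mulrBr; congr (_ - _).
  congr (_ * _); under eq_bigr do rewrite -exprM -exprD.
  rewrite prod_exprX /wdeg big_distrr /= /code -big_split /=; congr (_ ^+ _).
  by apply: eq_bigr => i _; rewrite mulnDl mulnA [(mu i * _)%N]mulnC.
rewrite prod_exprX mulrCA -exprM -exprD; congr (_ * (_ ^+ _)).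
by rewrite /code; congr (_ + _); apply: eq_bigr => i _; rewrite mulnC.
Qed.

Lemma wdeg_supp nu : f@_nu != 0 -> wdeg w nu = ww.
Proof.
move=> fnu; apply/eqP; apply: contraT => wdegN.
have nuS : nu \in msupp f by rewrite mcoeff_msupp.
have := congr1 (fun q : {poly R} => q`_(C * wdeg w nu + code nu)) kronecker_poly_eq0.
rewrite coef0 coef_sum (bigD1_seq nu) ?msupp_uniq //= coefZ coefB !coefXn eqxx.
have -> : (C * wdeg w nu + code nu == C * ww + code nu)%N = false.
  by apply/negbTE; rewrite eqn_add2r eqn_pmul2l.
rewrite subr0 mulr1 big1_seq ?addr0 => [/eqP|mu /andP [muN muS]]; first by rewrite (negbTE fnu).
rewrite coefZ coefB !coefXn.
have exp_neq m1 m2 : (C * m1 + code nu == C * m2 + code mu)%N = false.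
  apply/negP => /eqP/(congr1 (modn^~ C)); rewrite !code_mod // => /(code_inj nuS muS) /eqP.
  by rewrite eq_sym (negbTE muN).
by rewrite !exp_neq subrr mulr0.
Qed.

End WeightedHomogeneous.

Lemma weighted_homogeneous_supp_hyperplane (R : realType) d (f : {mpoly R[d]})
    (delta : 'I_d -> nat) :
  weighted_homogeneous f -> (forall i, 0 < delta i)%N ->
  (forall i, f@_(mnm1 i *+ delta i)%MM != 0) ->
  forall nu, f@_nu != 0 -> \sum_(i < d) (nu i)%:R / (delta i)%:R = 1 :> R.
Proof.
case=> w [ww [w_gt0 [ww_gt0 f_wh]]] delta_gt0 pure nu fnu.
have wdelta i : (w i * delta i)%N = ww.
  rewrite -(wdeg_supp f_wh (pure i)) /wdeg (bigD1 i) //= big1 ?addn0.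
    by rewrite mulmnE mnm1E eqxx mul1n.
  by move=> j /negbTE ji; rewrite mulmnE mnm1E eq_sym ji mul0n muln0.
have nat_neq0 n : (0 < n)%N -> (n%:R : R) != 0 by rewrite pnatr_eq0 -lt0n.
transitivity (\sum_(i < d) (w i * nu i)%N%:R / (ww%:R : R)).
  apply: eq_bigr => i _; rewrite -(wdelta i) !natrM -mulf_div divff ?mul1r //.
  exact: nat_neq0.
by rewrite -mulr_suml -natr_sum -/(wdeg w nu) (wdeg_supp f_wh fnu) divff ?nat_neq0.
Qed.

Section SumOverFaces.
Variables (A : comUnitRingType) (F : int -> A -> Prop).
Hypothesis hF : complete_filtration F.
Variable L : A.
Hypothesis hLF : F 1 L^-1.
Variables (R : realType) (d : nat) (f : {mpoly R[d]}) (delta : 'I_d -> nat) (i0 : 'I_d).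
Hypothesis delta_gt0 : forall i, (0 < delta i)%N.
Hypothesis pure_monomial : forall i, f@_(mnm1 i *+ delta i)%MM != 0.
Hypothesis supp_hyperplane : forall nu : 'X_{1..d}, f@_nu != 0 ->
  \sum_(i < d) (nu i)%:R / (delta i)%:R = 1 :> R.

Lemma compact_face_is_mk_natE (k : 'I_d -> nat) j :
  compact_face f (face_of f (nat_vec R k)) /\ is_mk f (nat_vec R k) j%:R <->
  pos_level delta j k.
Proof.
rewrite (compact_face_natE delta_gt0 pure_monomial _ i0).
rewrite (is_mk_natE delta_gt0 pure_monomial supp_hyperplane _ _ i0).
by split=> [[k_gt0 [kj kex]]|[k_gt0 kj kex]].
Qed.

Lemma sum_S_pos_level j : sum_S F L f j = hsum F (pos_level delta j) (lpow L^-1).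
Proof.
pose g k := face_of f (nat_vec R k).
pose Q k := is_mk f (nat_vec R k) j%:R.
have S_sigmaE : (fun tau => S_sigma F L f tau j) =
    fun tau => hsum F (fun k => g k = tau /\ Q k) (lpow L^-1).
  apply/funext => tau; congr hsum; apply/funext => k; apply/propext.
  by split=> [[[_ e] Qk] //|[e Qk]]; split=> //; split=> // i; apply: ler0n.
pose Ts := undup [seq t <- map g (box d (2 * \prod_(i < d) delta i)) | `[< compact_face f t >]].
rewrite /sum_S S_sigmaE (hsum_partition hF hLF (Ts := Ts)).
- by congr hsum; apply/funext => k; apply/propext; apply: compact_face_is_mk_natE.
- exact: undup_uniq.
- by move=> t; rewrite mem_undup mem_filter => /andP [/asboolP].
move=> k Cg Qk; have /compact_face_is_mk_natE lk : _ /\ _ := conj Cg Qk.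
have [k' k'_le k'e] := face_of_pos_level_bounded delta_gt0 pure_monomial supp_hyperplane lk.
rewrite mem_undup mem_filter asboolT //=; apply/mapP; exists k'; last by rewrite /g k'e.
by rewrite mem_box; apply/forallP.
Qed.

Hypothesis hL : L \is a GRing.unit.

Lemma B_fE m : B_f F L f m = 1 - L^-1 ^+ (\sum_(i < d) m %/ delta i)%N.
Proof.
set l := L^-1; have Ll : L * l = 1 by rewrite mulrV.
rewrite /B_f /ps_scale /ps_mul /ps_inv_1mT.
have -> : \sum_(i < m.+1) 1 * sum_S F L f (m - i)%N =
    \sum_(j < m.+1) hsum F (pos_level delta j) (lpow l).
  rewrite (reindex_inj rev_ord_inj) /=; apply: eq_bigr => i _.
  by rewrite mul1r sum_S_pos_level subSS subKn // -ltnS.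
have -> : (L - 1) ^+ d = L ^+ d * (1 - l) ^+ d by rewrite -exprMn mulrBr mulr1 Ll.
rewrite -mulrA sum_hsum_pos_level // mulrBr -exprMn Ll expr1n exprD mulrA -exprMn Ll.
by rewrite expr1n mul1r.
Qed.

End SumOverFaces.

Lemma coef_T_mul_inv_1mT (A : comUnitRingType) m :
  ps_mul (ps_T A) (ps_inv_1mT A) m = if m == 0%N then 0 else 1.
Proof.
rewrite /ps_mul /ps_T /ps_inv_1mT; case: m => [|m]; first by rewrite big_ord1 /= mulr1.
by rewrite 2!big_ord_recl /= !mulr1 big1_eq add0r addr0.
Qed.

Unset Implicit Arguments.
Set Strict Implicit.

Theorem lemma4p4
  (A : comUnitRingType) (F : int -> A -> Prop) (hF : complete_filtration F)
  (L : A) (hL : L \is a GRing.unit) (hLF : F 1%R L^-1)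
  (R : realType) (d : nat) (hd : (0 < d)%N) (f : {mpoly R[d]})
  (hconv : convenient f) (hnd : non_degenerate f) (hwh : weighted_homogeneous f)
  (delta : 'I_d -> nat) (hdelta : forall i, (1 <= delta i)%N /\ f@_(mnm1 i *+ delta i)%MM != 0) :
  ps_sub (B_f F L f) (ps_mul (ps_T A) (ps_inv_1mT A))
  = (fun m : nat => if m == 0%N then 0 else - (L^-1 ^+ (\sum_(i < d) (m %/ delta i)%N))).
Proof.
have delta_gt0 i : (0 < delta i)%N by case: (hdelta i).
have pure i : f@_(mnm1 i *+ delta i)%MM != 0 by case: (hdelta i).
have hyper := weighted_homogeneous_supp_hyperplane hwh delta_gt0 pure.
apply/funext => m; rewrite /ps_sub (B_fE hF hLF (Ordinal hd) delta_gt0 pure hyper hL).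
rewrite coef_T_mul_inv_1mT; case: eqP => [->|_]; last by rewrite addrAC subrr add0r.
by rewrite big1 ?expr0 ?subrr // => i _; rewrite div0n.
Qed.
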